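(* Let $k$ be a field and $S=k[x_1,\dots,x_n]$. Let $I\subseteq K\subseteq S$ and $J\subseteq L\subseteq S$ be monomial ideals with $\dim_k S/I<\infty$ and $\dim_k S/J<\infty$, and let $\phi\colon K/I\to L/J$ be an $S$-module isomorphism sending monomials to monomials. Let $M=(S/I\oplus S/J)/\langle (f,-\phi(f))\mid f\in K/I\rangle$, $d=\dim_k M$, let $A_i$ be the $d\times d$ matrix of multiplication by $x_i$ on $M$ in its natural monomial basis, and let $\mathcal{A}$ be the unital $k$-algebra generated by $A_1,\dots,A_n$. Let $\lambda$ (resp. $\mu$) be the $n$-dimensional Young diagram corresponding to $I$ (resp. $J$), and let $\nu$ be the skew shape associated with $K/I$. Then \[ \dim_k\mathcal{A}\le d\iff |\nu|\le|\lambda\cap\mu|. \]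
   Context: Monomials $x^a$ are identified with $a\in\mathbb{N}^n$. The $n$-dimensional Young diagram corresponding to a monomial ideal $I$ with $\dim_k S/I<\infty$ is $\{a\in\mathbb{N}^n: x^a\notin I\}$. The skew shape associated with $K/I$ is $\{a\in\mathbb{N}^n: x^a\in K,\ x^a\notin I\}$. An isomorphism $\phi$ sends monomials to monomials if it maps the class of each monomial of $K$ not in $I$ to the class of a monomial of $L$ not in $J$. *)

From HB Require Import structures.
From mathcomp Require Import all_boot all_order all_algebra.
From mathcomp Require Import mpoly.
Set Implicit Arguments. Unset Strict Implicit. Unset Printing Implicit Defensive.
Import GRing.Theory.
Local Open Scope ring_scope.

Section Defs.
Variables (k : fieldType) (n : nat).
Local Notation S := {mpoly k[n]}.

Definition monomial_ideal (I : S -> Prop) : Prop :=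
  exists G : 'X_{1..n} -> Prop, forall p : S,
    I p <-> exists (r : nat) (a : 'I_r -> S) (m : 'I_r -> 'X_{1..n}),
              (forall j, G (m j)) /\ p = \sum_(j < r) a j * 'X_[m j].

Definition fin_colength (I : S -> Prop) : Prop :=
  exists (r : nat) (b : 'I_r -> S), forall p : S,
    exists c : 'I_r -> k, I (p - \sum_(j < r) c j *: b j).

(* phi : S -> S represents (on representatives) an S-module isomorphism
   K/I -> L/J sending (the class of) each monomial of K not in I to
   (the class of) a monomial of L not in J. *)
Definition monomial_iso (I K J L : S -> Prop) (phi : S -> S) : Prop :=
  [/\ (forall p, K p -> L (phi p)),
      (forall p q, K p -> K q -> I (p - q) -> J (phi p - phi q)),
      (forall a p q, K p -> K q -> J (phi (a * p + q) - (a * phi p + phi q))),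
      (forall p, K p -> J (phi p) -> I p) &
      (forall q, L q -> exists2 p, K p & J (phi p - q))] /\
      (forall m, K 'X_[m] -> ~ I 'X_[m] ->
         exists m', [/\ L 'X_[m'], ~ J 'X_[m'] & J (phi 'X_[m] - 'X_[m'])]).

(* The kernel of  S x S -> M = (S/I (+) S/J) / < (f, -phi f) | f in K/I > *)
Definition Mker (I K J : S -> Prop) (phi : S -> S) (v : S * S) : Prop :=
  exists (r : nat) (a f : 'I_r -> S),
    [/\ (forall j, K (f j)),
        I (v.1 - \sum_(j < r) a j * f j) &
        J (v.2 + \sum_(j < r) a j * phi (f j))].

Definition pcomb (d : nat) (c : 'I_d -> k) (b : 'I_d -> S * S) : S * S :=
  (\sum_(j < d) c j *: (b j).1, \sum_(j < d) c j *: (b j).2).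

Definition monomial_basis (N : S * S -> Prop) (d : nat) (b : 'I_d -> S * S) : Prop :=
  [/\ (forall v : S * S, exists c : 'I_d -> k,
         N (v.1 - (pcomb c b).1, v.2 - (pcomb c b).2)),
      (forall c : 'I_d -> k, N (pcomb c b) -> forall j, c j = 0) &
      (forall j, (exists m, b j = ('X_[m], 0)) \/ (exists m, b j = (0, 'X_[m])))].

(* A i is the matrix of multiplication by x_i on M in the basis b
   (column j holds the coordinates of x_i * b j) *)
Definition mult_matrices (N : S * S -> Prop) (d : nat) (b : 'I_d -> S * S)
    (A : 'I_n -> 'M[k]_d) : Prop :=
  forall i j, N ('X_i * (b j).1 - (pcomb (fun l => A i l j) b).1,
                 'X_i * (b j).2 - (pcomb (fun l => A i l j) b).2).

Definition subalg_with (d : nat) (A : 'I_n -> 'M[k]_d) (E : {vspace 'M[k]_d}) : Prop :=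
  [/\ (1%:M : 'M[k]_d) \in E, (forall i, A i \in E) &
      (forall B C, B \in E -> C \in E -> B *m C \in E)].

Definition gen_alg (d : nat) (A : 'I_n -> 'M[k]_d) (E : {vspace 'M[k]_d}) : Prop :=
  subalg_with A E /\ (forall F, subalg_with A F -> (E <= F)%VS).

Definition card_of (P : 'X_{1..n} -> Prop) (c : nat) : Prop :=
  exists s : seq 'X_{1..n}, [/\ uniq s, size s = c & forall a, a \in s <-> P a].

Definition young_diagram (I : S -> Prop) (a : 'X_{1..n}) : Prop := ~ I 'X_[a].
Definition skew_shape (I K : S -> Prop) (a : 'X_{1..n}) : Prop := K 'X_[a] /\ ~ I 'X_[a].

End Defs.

From HB Require Import structures.
From mathcomp Require Import all_boot all_order all_algebra.
From mathcomp Require Import mpoly.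
From mathcomp Require Import ring zify.
From Stdlib Require Import ClassicalEpsilon.
Set Implicit Arguments. Unset Strict Implicit. Unset Printing Implicit Defensive.
Import GRing.Theory.
Local Open Scope ring_scope.

(* The algebra 𝒜 is the image of the action S -> End_k(M), p |-> (multiplication
   by p), whose kernel is Ann M = I ∩ J: since phi is well defined and injective,
   a relation of the form (g, 0) (resp. (0, h)) has g ∈ I (resp. h ∈ J), so p
   kills the generators (1, 0) and (0, 1) of M only if p ∈ I ∩ J.  Hence
   dim 𝒜 = dim S/(I ∩ J) = |λ ∪ μ| = |λ| + |μ| - |λ ∩ μ|.  On the other hand,
   modulo I ⊕ J the relations (x^a, -phi x^a), a ∈ ν, are linearly independent
   and span all relations, so d = |λ| + |μ| - |ν|.  Comparing the two counts
   gives the equivalence. *)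

Definition asbool (Q : Prop) : bool :=
  if excluded_middle_informative Q then true else false.

Lemma asboolP (Q : Prop) : reflect Q (asbool Q).
Proof. by rewrite /asbool; case: excluded_middle_informative => HQ; constructor. Qed.

Section MonomialIdeal.
Variables (k : fieldType) (n : nat) (P : {mpoly k[n]} -> Prop).
Hypothesis hP : monomial_ideal P.

Lemma monomial_ideal0 : P 0.
Proof.
case: hP => G HG; apply/HG; exists 0%N, (fun _ => 0), (fun _ => 0%MM).
by split; [case | rewrite big_ord0].
Qed.

Lemma monomial_idealD p q : P p -> P q -> P (p + q).
Proof.
case: hP => G HG /HG [r1 [a1 [m1 [G1 ->]]]] /HG [r2 [a2 [m2 [G2 ->]]]].
apply/HG; exists (r1 + r2)%N,
  (fun j => match split j with inl x => a1 x | inr y => a2 y end),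
  (fun j => match split j with inl x => m1 x | inr y => m2 y end).
split; first by move=> j; case: (split j).
rewrite big_split_ord /=; congr (_ + _); apply: eq_bigr => i _.
  by rewrite (unsplitK (inl _ : 'I_r1 + 'I_r2)).
by rewrite (unsplitK (inr _ : 'I_r1 + 'I_r2)).
Qed.

Lemma monomial_idealMl a p : P p -> P (a * p).
Proof.
case: hP => G HG /HG [r [a1 [m1 [G1 ->]]]].
apply/HG; exists r, (fun j => a * a1 j), m1; split=> //.
by rewrite mulr_sumr; apply: eq_bigr => i _; rewrite mulrA.
Qed.

Lemma monomial_idealMr a p : P p -> P (p * a).
Proof. by rewrite mulrC; apply: monomial_idealMl. Qed.

Lemma monomial_idealZ c p : P p -> P (c *: p).
Proof. by rewrite -mul_mpolyC; apply: monomial_idealMl. Qed.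

Lemma monomial_idealN p : P p -> P (- p).
Proof. by rewrite -scaleN1r; apply: monomial_idealZ. Qed.

Lemma monomial_idealB p q : P p -> P q -> P (p - q).
Proof. by move=> Pp /monomial_idealN; apply: monomial_idealD. Qed.

Lemma monomial_ideal_sum (T : Type) (r : seq T) (Q : pred T) (F : T -> {mpoly k[n]}) :
  (forall i, Q i -> P (F i)) -> P (\sum_(i <- r | Q i) F i).
Proof.
by move=> PF; apply: big_ind => //; [exact: monomial_ideal0 | exact: monomial_idealD].
Qed.

Lemma monomial_ideal_msuppP p : P p <-> (forall m, m \in msupp p -> P 'X_[m]).
Proof.
split=> [|Psupp]; last first.
  rewrite (mpolyE p) big_seq; apply: monomial_ideal_sum => m /Psupp.
  exact: monomial_idealZ.
case: (hP) => G HG /HG [r [a [mm [Gm ->]]]] m.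
rewrite mcoeff_msupp raddf_sum /= => nz.
have /existsP [j] : [exists j, (a j * 'X_[mm j])@_m != 0].
  by apply: contraNT nz => /existsPn z; rewrite big1 // => j _; apply/eqP/negPn/z.
rewrite -mcoeff_msupp (perm_mem (msuppMX _ _)) => /mapP [m' _ ->].
rewrite mpolyXD; apply: monomial_idealMr; apply/HG.
by exists 1%N, (fun _ => 1), (fun _ => mm j); rewrite big_ord1 mul1r.
Qed.

Lemma monomial_ideal_mcoeff_eq0 p m : P p -> ~ P 'X_[m] -> p@_m = 0.
Proof.
move=> /monomial_ideal_msuppP Psupp PXm; apply/eqP; rewrite mcoeff_eq0.
by apply/negP => /Psupp.
Qed.

Lemma standard_monomials : fin_colength P ->
  exists2 s : seq 'X_{1..n}, uniq s & forall a, a \in s <-> ~ P 'X_[a].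
Proof.
case=> r [b Hb]; pose l := flatten [seq msupp (b j) | j <- enum 'I_r].
exists (undup [seq a <- l | ~~ asbool (P 'X_[a])]) => [|a]; first exact: undup_uniq.
rewrite mem_undup mem_filter; split; first by case/andP => /asboolP.
move=> nPa; apply/andP; split; first by apply/asboolP.
have [c /monomial_ideal_mcoeff_eq0 /(_ nPa)] := Hb 'X_[a].
rewrite mcoeffB mcoeffX eqxx raddf_sum /=.
apply: contraPT => nla; rewrite big1 => [|j _].
  by rewrite subr0 => /eqP; rewrite oner_eq0.
rewrite mcoeffZ memN_msupp_eq0 ?mulr0 //; apply: contraNN nla => ?.
by apply/flattenP; exists (msupp (b j)) => //; apply: map_f; rewrite mem_enum.
Qed.

End MonomialIdeal.

Section StandardCoordinates.
Variables (k : fieldType) (n : nat).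
Local Notation S := {mpoly k[n]}.

Lemma mcoeff_sum_X r (c : 'I_r -> k) (f : 'I_r -> 'X_{1..n}) j :
  injective f -> (\sum_i c i *: 'X_[f i] : S)@_(f j) = c j.
Proof.
move=> f_inj; rewrite raddf_sum /= (bigD1 j) //= big1 ?addr0.
  by rewrite mcoeffZ mcoeffX eqxx mulr1.
by move=> i ij; rewrite mcoeffZ mcoeffX (inj_eq f_inj) (negbTE ij) mulr0.
Qed.

Lemma mcoeff_sum_X_out r (c : 'I_r -> k) (f : 'I_r -> 'X_{1..n}) m :
  (forall i, f i != m) -> (\sum_i c i *: 'X_[f i] : S)@_m = 0.
Proof.
move=> fm; rewrite raddf_sum /= big1 // => i _.
by rewrite mcoeffZ mcoeffX (negbTE (fm i)) mulr0.
Qed.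

Definition coords (s : seq 'X_{1..n}) (p : S) : 'rV[k]_(size s) :=
  \row_i p@_(tnth (in_tuple s) i).

Fact coords_is_linear s : linear (coords s).
Proof. by move=> c p q; apply/rowP => i; rewrite !mxE linearP. Qed.

HB.instance Definition _ s :=
  GRing.isSemilinear.Build k S 'rV[k]_(size s) _ (coords s)
    (GRing.semilinear_linear (coords_is_linear s)).

Lemma coords_sum_X s (u : 'rV_(size s)) :
  uniq s -> coords s (\sum_i u 0 i *: 'X_[tnth (in_tuple s) i]) = u.
Proof.
move=> /(tuple_uniqP (in_tuple s)) s_inj.
by apply/rowP => j; rewrite mxE mcoeff_sum_X.
Qed.

Variables (P : S -> Prop) (s : seq 'X_{1..n}).
Hypothesis hP : monomial_ideal P.
Hypothesis mem_s : forall a, a \in s <-> ~ P 'X_[a].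

Lemma coords_eq0 p : coords s p = 0 <-> P p.
Proof.
split=> [p0 | Pp]; last first.
  apply/rowP => i; rewrite !mxE (monomial_ideal_mcoeff_eq0 hP Pp) //.
  exact/mem_s/mem_tnth.
apply/(monomial_ideal_msuppP hP) => m; case: (asboolP (P 'X_[m])) => // nPm.
have /(tnthP (in_tuple s)) [i ->] : m \in s by apply/mem_s.
have := congr1 (fun u : 'rV_(size s) => u 0 i) p0.
by rewrite mcoeff_msupp !mxE => ->; rewrite eqxx.
Qed.

End StandardCoordinates.

Section Quotient.
Variables (k : fieldType) (n : nat).
Local Notation S := {mpoly k[n]}.
Variables (I K J : S -> Prop) (phi : S -> S).
Hypotheses (hI : monomial_ideal I) (hK : monomial_ideal K) (hJ : monomial_ideal J).
Hypothesis phi_wd : forall p q, K p -> K q -> I (p - q) -> J (phi p - phi q).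
Hypothesis phi_lin :
  forall a p q, K p -> K q -> J (phi (a * p + q) - (a * phi p + phi q)).
Hypothesis phi_inj : forall p, K p -> J (phi p) -> I p.
Local Notation N := (Mker I K J phi).

Lemma phi0 : J (phi 0).
Proof.
have := phi_lin 1 (monomial_ideal0 hK) (monomial_ideal0 hK); rewrite !mul1r !addr0.
by move/(monomial_idealN hJ); rewrite opprB addrK.
Qed.

Lemma phi_sum (T : Type) (r : seq T) (a f : T -> S) : (forall i, K (f i)) ->
  J (phi (\sum_(i <- r) a i * f i) - \sum_(i <- r) a i * phi (f i)).
Proof.
move=> Kf; elim: r => [|x r IHr]; first by rewrite !big_nil subr0; exact: phi0.
rewrite !big_cons; set F := \sum_(i <- r) _; set G := \sum_(i <- r) _.
have KF : K F by apply: (monomial_ideal_sum hK) => i _; apply: (monomial_idealMl hK).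
have -> : phi (a x * f x + F) - (a x * phi (f x) + G) =
  (phi (a x * f x + F) - (a x * phi (f x) + phi F)) + (phi F - G) by ring.
exact: (monomial_idealD hJ (phi_lin _ (Kf x) KF) IHr).
Qed.

Lemma MkerP v : N v <-> exists2 F, K F & I (v.1 - F) /\ J (v.2 + phi F).
Proof.
split=> [[r [a [f [Kf Iv Jv]]]] | [F KF [Iv Jv]]]; last first.
  by exists 1%N, (fun _ => 1), (fun _ => F); rewrite !big_ord1 !mul1r.
exists (\sum_j a j * f j).
  by apply: (monomial_ideal_sum hK) => j _; apply: (monomial_idealMl hK).
split=> //; have -> : v.2 + phi (\sum_j a j * f j) = (v.2 + \sum_j a j * phi (f j))
  + (phi (\sum_j a j * f j) - \sum_j a j * phi (f j)) by ring.
by apply: (monomial_idealD hJ Jv); apply: phi_sum.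
Qed.

Lemma Mker_ideal p q : I p -> J q -> N (p, q).
Proof.
move=> Ip Jq; apply/MkerP; exists 0; first exact: (monomial_ideal0 hK).
by split; rewrite /= ?subr0 //; apply: (monomial_idealD hJ Jq phi0).
Qed.

Lemma Mker0 : N 0.
Proof. by apply: Mker_ideal; [exact: monomial_ideal0 | exact: monomial_ideal0]. Qed.

Lemma MkerD v w : N v -> N w -> N (v + w).
Proof.
case/MkerP=> F KF [Iv Jv] /MkerP [G KG [Iw Jw]].
apply/MkerP; exists (F + G); first exact: (monomial_idealD hK KF KG).
split.
  have -> : (v + w).1 - (F + G) = (v.1 - F) + (w.1 - G) by rewrite /=; ring.
  exact: (monomial_idealD hI Iv Iw).
have := phi_lin 1 KF KG; rewrite !mul1r => phiD.
have -> : (v + w).2 + phi (F + G) =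
  (v.2 + phi F) + (w.2 + phi G) + (phi (F + G) - (phi F + phi G)) by rewrite /=; ring.
by apply: (monomial_idealD hJ) => //; apply: (monomial_idealD hJ).
Qed.

Lemma MkerM a v : N v -> N ((a, a) * v).
Proof.
case=> r [c [f [Kf Iv Jv]]]; exists r, (fun j => a * c j), f; split=> //=.
  have -> : a * v.1 - \sum_j a * c j * f j = a * (v.1 - \sum_j c j * f j).
    by rewrite mulrBr mulr_sumr; congr (_ - _); apply: eq_bigr => j _; rewrite mulrA.
  exact: (monomial_idealMl hI).
have -> : a * v.2 + \sum_j a * c j * phi (f j) = a * (v.2 + \sum_j c j * phi (f j)).
  by rewrite mulrDr mulr_sumr; congr (_ + _); apply: eq_bigr => j _; rewrite mulrA.
exact: (monomial_idealMl hJ).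
Qed.

Lemma MkerZ c v : N v -> N (c *: v).
Proof.
have -> : c *: v = (c%:MP, c%:MP) * v.
  by apply: injective_projections; rewrite /= mul_mpolyC.
exact: MkerM.
Qed.

Lemma MkerN v : N v -> N (- v).
Proof. by rewrite -scaleN1r; apply: MkerZ. Qed.

Lemma MkerB v w : N v -> N w -> N (v - w).
Proof. by move=> Nv /MkerN; apply: MkerD. Qed.

Lemma Mker_sum (T : Type) (r : seq T) (Q : pred T) (F : T -> S * S) :
  (forall i, Q i -> N (F i)) -> N (\sum_(i <- r | Q i) F i).
Proof. by move=> NF; apply: big_ind => //; [exact: Mker0 | exact: MkerD]. Qed.

Lemma Mker_rel f : K f -> N (f, - phi f).
Proof.
move=> Kf; apply/MkerP; exists f => //=; rewrite subrr addNr.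
by split; [exact: (monomial_ideal0 hI) | exact: (monomial_ideal0 hJ)].
Qed.

Lemma Mker_fst g : N (g, 0) -> I g.
Proof.
case/MkerP=> F KF [/= IgF]; rewrite add0r => /(phi_inj KF) IF.
by rewrite -(subrK F g); exact: (monomial_idealD hI IgF IF).
Qed.

Lemma Mker_snd h : N (0, h) -> J h.
Proof.
case/MkerP=> F KF [/=]; rewrite sub0r => /(monomial_idealN hI); rewrite opprK => IF Jh.
have JF : J (phi F).
  have := phi_wd KF (monomial_ideal0 hK); rewrite subr0 => /(_ IF).
  by move/(monomial_idealD hJ)/(_ phi0); rewrite subrK.
by rewrite -(addrK (phi F) h); exact: (monomial_idealB hJ Jh JF).
Qed.

Section StandardMonomials.
Variables (sl sm : seq 'X_{1..n}).
Hypotheses (sl_uniq : uniq sl) (sm_uniq : uniq sm).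
Hypothesis mem_sl : forall a, a \in sl <-> ~ I 'X_[a].
Hypothesis mem_sm : forall a, a \in sm <-> ~ J 'X_[a].

Definition std_coords (v : S * S) : 'rV[k]_(size sl + size sm) :=
  row_mx (coords sl v.1) (coords sm v.2).

Fact std_coords_is_linear : linear std_coords.
Proof. by move=> c v w; rewrite /std_coords !linearP scale_row_mx add_row_mx. Qed.

HB.instance Definition _ :=
  GRing.isSemilinear.Build k (S * S)%type 'rV[k]_(size sl + size sm) _ std_coords
    (GRing.semilinear_linear std_coords_is_linear).

Lemma std_coords_eq0 v : std_coords v = 0 <-> I v.1 /\ J v.2.
Proof.
split.
  by rewrite -row_mx0 => /eq_row_mx [/(coords_eq0 hI mem_sl) ? /(coords_eq0 hJ mem_sm)].
case=> /(coords_eq0 hI mem_sl) Iv /(coords_eq0 hJ mem_sm) Jv.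
by rewrite /std_coords Iv Jv row_mx0.
Qed.

Lemma Mker_std_coords_eq0 v : std_coords v = 0 -> N v.
Proof. by case/std_coords_eq0; case: v => x y; exact: Mker_ideal. Qed.

Lemma std_coords_surj w : exists v, std_coords v = w.
Proof.
exists (\sum_i lsubmx w 0 i *: 'X_[tnth (in_tuple sl) i],
        \sum_i rsubmx w 0 i *: 'X_[tnth (in_tuple sm) i]).
by rewrite /std_coords /= !coords_sum_X // hsubmxK.
Qed.

Definition skew_seq := [seq a <- sl | asbool (K 'X_[a])].
Local Notation skew_ i := (tnth (in_tuple skew_seq) i).

Lemma mem_skew_seq a : a \in skew_seq <-> K 'X_[a] /\ ~ I 'X_[a].
Proof.
rewrite mem_filter; split; first by case/andP => /asboolP Ka /mem_sl.
by case=> Ka /mem_sl ->; rewrite andbT; apply/asboolP.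
Qed.

Lemma card_skew_shape : card_of (skew_shape I K) (size skew_seq).
Proof. by exists skew_seq; split=> //; [exact: filter_uniq | exact: mem_skew_seq]. Qed.

Lemma card_young_meet :
  card_of (fun a => young_diagram I a /\ young_diagram J a) (count (mem sl) sm).
Proof.
exists [seq a <- sm | a \in sl]; split; [exact: filter_uniq | exact: size_filter |].
move=> a; rewrite mem_filter.
by split=> [/andP [/mem_sl ? /mem_sm ?] | [/mem_sl -> /mem_sm ->]].
Qed.

Lemma skew_K i : K 'X_[skew_ i].
Proof. by case: ((mem_skew_seq _).1 (mem_tnth i (in_tuple skew_seq))). Qed.

Lemma skew_notI i : ~ I 'X_[skew_ i].
Proof. by case: ((mem_skew_seq _).1 (mem_tnth i (in_tuple skew_seq))). Qed.

Lemma skew_inj : injective (fun i => skew_ i).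
Proof. by apply/(tuple_uniqP (in_tuple skew_seq)); exact: filter_uniq. Qed.

Definition skew_rel (i : 'I_(size skew_seq)) : S * S :=
  ('X_[skew_ i], - phi 'X_[skew_ i]).

Lemma Mker_skew_comb (e : 'I_(size skew_seq) -> k) : N (\sum_i e i *: skew_rel i).
Proof.
by apply: Mker_sum => i _; exact: (MkerZ _ (Mker_rel (skew_K i))).
Qed.

Lemma skew_reduction F : K F -> I (F - \sum_i F@_(skew_ i) *: 'X_[skew_ i]).
Proof.
move=> KF; apply/(monomial_ideal_msuppP hI) => m; rewrite mcoeff_msupp mcoeffB.
case: (boolP (m \in skew_seq)) => [/(tnthP (in_tuple skew_seq)) [i ->] | m_skew].
  by rewrite mcoeff_sum_X ?subrr ?eqxx //; exact: skew_inj.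
rewrite mcoeff_sum_X_out => [|i]; last first.
  by apply: contraNneq m_skew => <-; exact: mem_tnth.
rewrite subr0 -mcoeff_msupp => /((monomial_ideal_msuppP hK F).1 KF) KXm.
by case: (asboolP (I 'X_[m])) => // nIm; case/negP: m_skew; exact/mem_skew_seq.
Qed.

Lemma Mker_skew_span u : N u ->
  exists e, std_coords u = std_coords (\sum_i e i *: skew_rel i).
Proof.
case/MkerP=> F KF [IuF JuF].
pose e i := F@_(skew_ i); pose G := \sum_i e i *: 'X_[skew_ i].
have rel1 : (\sum_i e i *: skew_rel i).1 = G by rewrite raddf_sum.
have rel2 : (\sum_i e i *: skew_rel i).2 = - \sum_i (e i)%:MP * phi 'X_[skew_ i].
  by rewrite raddf_sum -sumrN; apply: eq_bigr => i _; rewrite /= scalerN mul_mpolyC.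
have IFG : I (F - G) := skew_reduction KF.
have KG : K G.
  by apply: (monomial_ideal_sum hK) => i _; apply: (monomial_idealZ hK); exact: skew_K.
have phiG : J (phi G - \sum_i (e i)%:MP * phi 'X_[skew_ i]).
  have := phi_sum (index_enum _) (fun i => (e i)%:MP) skew_K.
  by congr (J (phi _ - _)); apply: eq_bigr => i _; rewrite mul_mpolyC.
exists e; apply/eqP; rewrite -subr_eq0 -linearB; apply/eqP/std_coords_eq0; split.
  by rewrite /= rel1 -(subrKA F); exact: (monomial_idealD hI IuF IFG).
rewrite /= rel2 opprK.
have -> : u.2 + \sum_i (e i)%:MP * phi 'X_[skew_ i] = (u.2 + phi F) - (phi F - phi G)
   - (phi G - \sum_i (e i)%:MP * phi 'X_[skew_ i]) by ring.
apply: (monomial_idealB hJ _ phiG); apply: (monomial_idealB hJ JuF).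
exact: (phi_wd KF KG IFG).
Qed.

Section Basis.
Variables (d : nat) (b : 'I_d -> S * S).
Hypothesis b_span : forall v, exists c, N (v - \sum_j c j *: b j).
Hypothesis b_free : forall c, N (\sum_j c j *: b j) -> forall j, c j = 0.

Definition basis_mx : 'M_(d, size sl + size sm) := \matrix_j std_coords (b j).
Definition skew_mx : 'M_(size skew_seq, size sl + size sm) :=
  \matrix_i std_coords (skew_rel i).

Lemma mul_basis_mx (c : 'rV_d) : c *m basis_mx = std_coords (\sum_j c 0 j *: b j).
Proof.
by rewrite mulmx_sum_row linear_sum; apply: eq_bigr => j _; rewrite rowK linearZ.
Qed.

Lemma mul_skew_mx (c : 'rV_(size skew_seq)) :
  c *m skew_mx = std_coords (\sum_i c 0 i *: skew_rel i).
Proof.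
by rewrite mulmx_sum_row linear_sum; apply: eq_bigr => i _; rewrite rowK linearZ.
Qed.

Lemma row_free_basis_skew : row_free (col_mx basis_mx skew_mx).
Proof.
apply/inj_row_free => c; rewrite -[c]hsubmxK mul_row_col mul_basis_mx mul_skew_mx.
rewrite -linearD; set c1 := lsubmx c; set c2 := rsubmx c => c0.
have Nb : N (\sum_j c1 0 j *: b j).
  rewrite -[X in N X](addrK (\sum_i c2 0 i *: skew_rel i)).
  exact: (MkerB (Mker_std_coords_eq0 c0) (Mker_skew_comb _)).
have c1_0 : c1 = 0 by apply/rowP => j; rewrite [RHS]mxE; exact: (b_free Nb j).
move: c0; rewrite c1_0 big1 => [|j _]; last by rewrite mxE scale0r.
rewrite add0r => /std_coords_eq0 [/=]; rewrite raddf_sum /= => Ic2 _.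
have c2_0 : c2 = 0.
  apply/rowP => i; rewrite [RHS]mxE -(mcoeff_sum_X (fun i => c2 0 i) i skew_inj).
  by apply: (monomial_ideal_mcoeff_eq0 hI Ic2); exact: skew_notI.
by rewrite c2_0 row_mx0.
Qed.

Lemma row_full_basis_skew : row_full (col_mx basis_mx skew_mx).
Proof.
rewrite -sub1mx; apply/row_subP => i.
have [v vE] := std_coords_surj (row i 1%:M).
have [c /Mker_skew_span [e eE]] := b_span v.
apply/submxP; exists (row_mx (\row_j c j) (\row_i e i)).
rewrite mul_row_col mul_basis_mx mul_skew_mx -vE.
rewrite (eq_bigr (fun j => c j *: b j)) => [|j _]; last by rewrite mxE.
rewrite (eq_bigr (fun i => e i *: skew_rel i)) => [|j _]; last by rewrite mxE.
by rewrite -eE -linearD subrKC.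
Qed.

Lemma size_basis_add_skew : (d + size skew_seq = size sl + size sm)%N.
Proof. by rewrite -(eqP row_free_basis_skew) (eqP row_full_basis_skew). Qed.

Definition basis_coord (v : S * S) : 'I_d -> k :=
  proj1_sig (constructive_indefinite_description _ (b_span v)).

Lemma basis_coordP v : N (v - \sum_j basis_coord v j *: b j).
Proof. exact: proj2_sig (constructive_indefinite_description _ (b_span v)). Qed.

Lemma basis_coord_unique v c :
  N (v - \sum_j c j *: b j) -> forall j, basis_coord v j = c j.
Proof.
move=> Nc j; apply/eqP; rewrite -subr_eq0; apply/eqP; move: j; apply: b_free.
have -> : \sum_j (basis_coord v j - c j) *: b j =
    (v - \sum_j c j *: b j) - (v - \sum_j basis_coord v j *: b j).
  by under eq_bigr do rewrite scalerBl; rewrite sumrB [RHS]addrC opprB addrA subrK.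
exact: (MkerB Nc (basis_coordP v)).
Qed.

Definition mult_mx (p : S) : 'M[k]_d := \matrix_(l, j) basis_coord ((p, p) * b j) l.

Lemma mult_mxP p j : N ((p, p) * b j - \sum_l mult_mx p l j *: b l).
Proof.
rewrite (eq_bigr (fun l => basis_coord ((p, p) * b j) l *: b l)) => [|l _].
  exact: basis_coordP.
by rewrite mxE.
Qed.

Lemma mult_mx_unique p j c :
  N ((p, p) * b j - \sum_l c l *: b l) -> forall l, mult_mx p l j = c l.
Proof. by move=> Nc l; rewrite mxE; exact: basis_coord_unique. Qed.

Fact mult_mx_is_linear : linear mult_mx.
Proof.
move=> c p q; apply/matrixP => l j; move: l; apply: mult_mx_unique.
have -> : (c *: p + q, c *: p + q) = c *: (p, p) + (q, q) by [].
have -> : \sum_l (c *: mult_mx p + mult_mx q) l j *: b l =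
    c *: \sum_l mult_mx p l j *: b l + \sum_l mult_mx q l j *: b l.
  rewrite scaler_sumr -big_split; apply: eq_bigr => l _.
  by rewrite !mxE scalerDl scalerA.
rewrite mulrDl -scalerAl opprD addrACA -scalerBr.
exact: (MkerD (MkerZ _ (mult_mxP _ _)) (mult_mxP _ _)).
Qed.

HB.instance Definition _ :=
  GRing.isSemilinear.Build k S 'M[k]_d _ mult_mx
    (GRing.semilinear_linear mult_mx_is_linear).

Lemma mult_mx1 : mult_mx 1 = 1%:M.
Proof.
apply/matrixP => l j; rewrite [RHS]mxE; move: l; apply: mult_mx_unique.
rewrite mul1r (bigD1 j) //= eqxx scale1r big1 => [|l /negbTE ->]; last by rewrite scale0r.
by rewrite addr0 subrr; exact: Mker0.
Qed.

Lemma mult_mxM p q : mult_mx (p * q) = mult_mx p *m mult_mx q.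
Proof.
apply/matrixP => l j; rewrite [RHS]mxE; move: l; apply: mult_mx_unique.
set P := mult_mx p; set Q := mult_mx q.
have pQ : (p, p) * \sum_m Q m j *: b m = \sum_m Q m j *: ((p, p) * b m).
  by rewrite mulr_sumr; apply: eq_bigr => m _; rewrite scalerAr.
have PQ : \sum_l (\sum_m P l m * Q m j) *: b l = \sum_m Q m j *: \sum_l P l m *: b l.
  under eq_bigr do rewrite scaler_suml; rewrite exchange_big /=; apply: eq_bigr => m _.
  by rewrite scaler_sumr; apply: eq_bigr => l _; rewrite scalerA mulrC.
have -> : (p * q, p * q) * b j - \sum_l (\sum_m P l m * Q m j) *: b l =
    (p, p) * ((q, q) * b j - \sum_m Q m j *: b m)
    + \sum_m Q m j *: ((p, p) * b m - \sum_l P l m *: b l).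
  under [X in _ = _ + X]eq_bigr do rewrite scalerBr.
  by rewrite PQ mulrBr pQ sumrB addrA subrK mulrA.
apply: MkerD; first exact: (MkerM _ (mult_mxP _ _)).
by apply: Mker_sum => m _; exact: (MkerZ _ (mult_mxP _ _)).
Qed.

Lemma mult_mx_eq0 p : mult_mx p = 0 <-> I p /\ J p.
Proof.
have diag v : (p, p) * v = (p * v.1, p * v.2) by [].
split=> [p0 | [Ip Jp]]; last first.
  apply/matrixP => l j; rewrite [RHS]mxE; move: l; apply: mult_mx_unique.
  rewrite big1 => [|l _]; last by rewrite scale0r.
  rewrite subr0 diag; apply: Mker_ideal.
    exact: (monomial_idealMr hI _ Ip).
  exact: (monomial_idealMr hJ _ Jp).
have Nb j : N ((p, p) * b j).
  by have := mult_mxP p j; rewrite p0 big1 ?subr0 // => l _; rewrite mxE scale0r.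
have Nv v : N ((p, p) * v).
  have [c Nc] := b_span v.
  rewrite -(subrK (\sum_j c j *: b j) v) mulrDr mulr_sumr.
  apply: (MkerD (MkerM _ Nc)); apply: Mker_sum => j _.
  by rewrite -scalerAr; exact: (MkerZ _ (Nb j)).
split; [apply: Mker_fst | apply: Mker_snd].
  by have := Nv (1, 0); rewrite diag /= mulr1 mulr0.
by have := Nv (0, 1); rewrite diag /= mulr1 mulr0.
Qed.

Section Generators.
Variable A : 'I_n -> 'M[k]_d.
Hypothesis hA : forall i j, N (('X_i, 'X_i) * b j - \sum_l A i l j *: b l).

Lemma mult_mxX i : mult_mx 'X_i = A i.
Proof. by apply/matrixP => l j; move: l; apply: mult_mx_unique. Qed.

Definition diagram_union := sl ++ [seq a <- sm | a \notin sl].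
Local Notation U := diagram_union.

Lemma diagram_union_uniq : uniq U.
Proof.
rewrite cat_uniq sl_uniq filter_uniq // andbT; apply/hasPn => a.
by rewrite mem_filter => /andP [].
Qed.

Lemma size_diagram_union : (size U + count (mem sl) sm = size sl + size sm)%N.
Proof.
by rewrite size_cat size_filter -addnA [X in (_ + X)%N]addnC count_predC.
Qed.

Lemma mem_diagram_union a : a \in U -> ~ I 'X_[a] \/ ~ J 'X_[a].
Proof.
by rewrite mem_cat mem_filter => /orP [/mem_sl | /andP [_ /mem_sm]]; [left | right].
Qed.

Lemma notin_diagram_union a : a \notin U -> I 'X_[a] /\ J 'X_[a].
Proof.
rewrite mem_cat mem_filter negb_or => /andP [a_sl]; rewrite a_sl /= => a_sm.
split; first by case: (asboolP (I 'X_[a])) => // /mem_sl; rewrite (negbTE a_sl).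
by case: (asboolP (J 'X_[a])) => // /mem_sm; rewrite (negbTE a_sm).
Qed.

Definition mult_alg : {vspace 'M[k]_d} := <<[seq mult_mx 'X_[a] | a <- U]>>%VS.

Lemma mult_mx_in_alg p : mult_mx p \in mult_alg.
Proof.
rewrite (mpolyE p) linear_sum; apply: memv_suml => m _; rewrite linearZ; apply: memvZ.
have [mU | /notin_diagram_union [Im Jm]] := boolP (m \in U).
  by apply: memv_span; apply: map_f.
by rewrite /= (_ : mult_mx 'X_[m] = 0) ?mem0v //; exact/mult_mx_eq0.
Qed.

Lemma mult_alg_mult_mx B : B \in mult_alg -> exists p, B = mult_mx p.
Proof.
set X := [seq mult_mx 'X_[a] | a <- U] => /(coord_span (X := in_tuple X)) ->.
exists (\sum_i coord (in_tuple X) i B *: 'X_[nth 0%MM U i]).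
rewrite linear_sum; apply: eq_bigr => i _; rewrite linearZ (nth_map 0%MM) //.
by rewrite -(size_map (fun a => mult_mx 'X_[a])).
Qed.

Lemma mult_mx_in_subalg F p : subalg_with A F -> mult_mx p \in F.
Proof.
case=> F1 FA FM.
have FX m : mult_mx 'X_[m] \in F.
  rewrite mpolyXE_id; apply: (big_ind (fun q => mult_mx q \in F)) => [|q r Fq Fr|i _].
  - by rewrite mult_mx1.
  - by rewrite mult_mxM; apply: FM.
  elim: (m i) => [|e IHe]; first by rewrite expr0 mult_mx1.
  by rewrite exprS mult_mxM mult_mxX; apply: FM.
rewrite (mpolyE p) linear_sum; apply: memv_suml => m _; rewrite linearZ; exact: memvZ.
Qed.

Lemma gen_alg_mult_alg : gen_alg A mult_alg.
Proof.
split; last first.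
  by move=> F AF; apply/span_subvP => B /mapP [a _ ->]; exact: mult_mx_in_subalg.
split; first by rewrite -mult_mx1 mult_mx_in_alg.
  by move=> i; rewrite -mult_mxX mult_mx_in_alg.
move=> B C /mult_alg_mult_mx [p ->] /mult_alg_mult_mx [q ->].
by rewrite -mult_mxM mult_mx_in_alg.
Qed.

Lemma dim_mult_alg : \dim mult_alg = size U.
Proof.
set X := [seq mult_mx 'X_[a] | a <- U].
have sizeX : size X = size U by rewrite size_map.
suff /eqP -> : free (in_tuple X) by [].
apply/freeP => c Xc i.
have U_inj : injective (fun j : 'I_(size X) => nth 0%MM U j).
  by move=> j1 j2 /eqP; rewrite nth_uniq ?diagram_union_uniq -?sizeX // => /eqP /val_inj.
have /mult_mx_eq0 [IU JU] : mult_mx (\sum_j c j *: 'X_[nth 0%MM U j]) = 0.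
  rewrite -[RHS]Xc linear_sum; apply: eq_bigr => j _.
  by rewrite linearZ (nth_map 0%MM) // -sizeX.
rewrite -(mcoeff_sum_X c i U_inj).
have iU : (i < size U)%N by rewrite -sizeX.
have [nI | nJ] := mem_diagram_union (mem_nth 0%MM iU).
  exact: (monomial_ideal_mcoeff_eq0 hI IU nI).
exact: (monomial_ideal_mcoeff_eq0 hJ JU nJ).
Qed.

End Generators.
End Basis.
End StandardMonomials.
End Quotient.

Lemma pcombE (k : fieldType) (n d : nat) (c : 'I_d -> k)
    (b : 'I_d -> {mpoly k[n]} * {mpoly k[n]}) :
  pcomb c b = \sum_j c j *: b j.
Proof. by apply: injective_projections; rewrite /= raddf_sum. Qed.

Theorem proposition2p1 (k : fieldType) (n : nat)
    (I K J L : {mpoly k[n]} -> Prop)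
    (hI : monomial_ideal I) (hK : monomial_ideal K)
    (hJ : monomial_ideal J) (hL : monomial_ideal L)
    (hIK : forall p, I p -> K p) (hJL : forall p, J p -> L p)
    (fI : fin_colength I) (fJ : fin_colength J)
    (phi : {mpoly k[n]} -> {mpoly k[n]}) (hphi : monomial_iso I K J L phi)
    (d : nat) (b : 'I_d -> {mpoly k[n]} * {mpoly k[n]})
    (hb : monomial_basis (Mker I K J phi) b)
    (A : 'I_n -> 'M[k]_d) (hA : mult_matrices (Mker I K J phi) b A) :
  exists (E : {vspace 'M[k]_d}) (nu lm : nat),
    [/\ gen_alg A E,
        card_of (skew_shape I K) nu,
        card_of (fun a => young_diagram I a /\ young_diagram J a) lm &
        ((dimv E <= d)%N <-> (nu <= lm)%N)].
Proof.
case: hphi => [[_ phi_wd phi_lin phi_inj _] _]; case: hb => b_span b_free _.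
have {}b_span v : exists c, Mker I K J phi (v - \sum_j c j *: b j).
  by have [c Nc] := b_span v; exists c; rewrite -pcombE.
have {}b_free c : Mker I K J phi (\sum_j c j *: b j) -> forall j, c j = 0.
  by rewrite -pcombE; exact: b_free.
have {}hA i j : Mker I K J phi (('X_i, 'X_i) * b j - \sum_l A i l j *: b l).
  by have := hA i j; rewrite pcombE.
have [sl sl_uniq mem_sl] := standard_monomials hI fI.
have [sm sm_uniq mem_sm] := standard_monomials hJ fJ.
exists (mult_alg sl sm b_span), (size (skew_seq K sl)), (count (mem sl) sm); split.
- exact: (gen_alg_mult_alg hI hK hJ phi_wd phi_lin phi_inj mem_sl mem_sm b_span b_free hA).
- exact: (card_skew_shape K sl_uniq mem_sl).
- exact: (card_young_meet sm_uniq mem_sl mem_sm).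
have := size_basis_add_skew hI hK hJ phi_wd phi_lin
  sl_uniq sm_uniq mem_sl mem_sm b_span b_free.
have := size_diagram_union sl sm.
rewrite (dim_mult_alg hI hK hJ phi_wd phi_lin phi_inj
  sl_uniq sm_uniq mem_sl mem_sm b_span b_free).
by move=> ? ?; split=> ?; lia.
Qed.
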